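(* Let $R$ be the ring of integers in a totally real number field. Then the homomorphism $O_n(R)\to\mathrm{Aut}(X(\mathbb E^n_R))$ coming from the action of $O_n(R)$ on the Stiefel complex $X(\mathbb E^n_R)$ is an isomorphism of groups.
   Context: A number field $K$ is totally real if every embedding $K\hookrightarrow\mathbb C$ has image in $\mathbb R$. $\mathbb E^n_R=(R^n,q)$ with $q(x)=x_1^2+\dots+x_n^2$ and $B_q(x,y)=q(x+y)-q(x)-q(y)$; $O_n(R)$ is the group of $R$-linear automorphisms of $R^n$ preserving $q$. The Stiefel complex $X(\mathbb E^n_R)$ is the simplicial complex whose vertices are the unit vectors $v$ ($q(v)=1$), with $v_1,\dots,v_k$ spanning a simplex iff $B_q(v_i,v_j)=0$ for $i\neq j$. $\mathrm{Aut}(X(\mathbb E^n_R))$ is its group of simplicial automorphisms. *)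

From HB Require Import structures.
From mathcomp Require Import all_boot all_order all_algebra all_field.
From Stdlib Require Lists.List.
Set Implicit Arguments. Unset Strict Implicit. Unset Printing Implicit Defensive.
Import Order.TTheory GRing.Theory Num.Theory.
Local Open Scope ring_scope.

(* Totally real: every embedding K -> C (equivalently into the algebraic
   numbers algC, which contain every image of K) lands in the reals. *)
Definition totally_real (K : fieldExtType rat) : Prop :=
  forall (f : {rmorphism K -> algC}) (x : K), f x \is Num.real.

Definition in_OK (K : fieldExtType rat) (x : K) : Prop :=
  integralOver (fun z : int => z%:~R : K) x.

Definition int_vec (K : fieldExtType rat) (n : nat) (v : 'cV[K]_n) : Prop :=
  forall i, in_OK (v i 0).

Definition qform (K : fieldExtType rat) (n : nat) (v : 'cV[K]_n) : K :=
  \sum_(i < n) (v i 0) ^+ 2.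

Definition Bq (K : fieldExtType rat) (n : nat) (v w : 'cV[K]_n) : K :=
  qform (v + w) - qform v - qform w.

Definition is_vertex (K : fieldExtType rat) (n : nat) (v : 'cV[K]_n) : Prop :=
  int_vec v /\ qform v = 1.

Definition vertex (K : fieldExtType rat) (n : nat) :=
  {v : 'cV[K]_n | is_vertex v}.

Definition is_simplex (K : fieldExtType rat) (n : nat) (s : seq (vertex K n)) : Prop :=
  forall x y, List.In x s -> List.In y s -> x <> y -> Bq (proj1_sig x) (proj1_sig y) = 0.

Definition is_simplicial_aut (K : fieldExtType rat) (n : nat)
  (f : vertex K n -> vertex K n) : Prop :=
  bijective f /\ forall s : seq (vertex K n), is_simplex s <-> is_simplex (map f s).

(* O_n(R): R-linear automorphisms of R^n (matrices with entries in R whose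
   inverse also has entries in R) preserving q *)
Definition in_On (K : fieldExtType rat) (n : nat) (M : 'M[K]_n) : Prop :=
  [/\ forall i j, in_OK (M i j),
      M \in unitmx,
      forall i j, in_OK (invmx M i j)
    & forall v : 'cV[K]_n, int_vec v -> qform (M *m v) = qform v].

From HB Require Import structures.
From mathcomp Require Import all_boot all_order all_algebra all_field.
From mathcomp Require Import ring.
From Stdlib Require Import Classical.
Import Order.TTheory GRing.Theory Num.Theory.
Local Open Scope ring_scope.
Set Implicit Arguments. Unset Strict Implicit. Unset Printing Implicit Defensive.

(* If v is a unit vector of R^n, the numbers v_i^2 are totally nonnegative
   algebraic integers (K is totally real) whose conjugates sum to 1, so all
   their conjugates lie in [0, 1].  A nonzero algebraic integer a with all
   conjugates in (0, 1] is 1, because the product of its conjugates is a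
   positive integer and is at most a.  Hence the vertices of X(E^n_R) are the +-e_i and
   X(E^n_R) is the boundary of the cross-polytope.  A simplicial automorphism
   f preserves orthogonality; since -x is the only vertex other than x not
   orthogonal to x, f commutes with x |-> -x, so f is induced by the matrix
   whose columns are the f(e_i), which is orthogonal with entries in R. *)

Lemma splitting_root_minPoly_rmorph (F : fieldType) (L : fieldExtType F)
    (p : {poly L}) (x y : L) :
  p \is a polyOver 1%VS -> splittingFieldFor 1 p fullv -> root (minPoly 1 x) y ->
  exists phi : {rmorphism L -> L}, phi x = y.
Proof.
move=> F1p splitp rxy.
have rxy1 : root (map_poly \1%VF (minPoly 1 x)) y.
  by rewrite map_poly_id // => c _; rewrite lfunE.
have homx := kHomExtendP (subvv 1%AS) (kHom1 1 1) rxy1.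
have splitx : splittingFieldFor <<1; x>>%AS p fullv.
  exact: splittingFieldForS (sub1v _) (subvf _) splitp.
have [g homg Dg] := kHom_extends (sub1v _) homx F1p splitx.
pose phi : {rmorphism L -> L} := HB.pack (fun_of_lfun g)
  (GRing.isMonoidMorphism.Build _ _ _ (kHom_monoid_morphism homg)).
exists phi; rewrite /= -Dg ?memv_adjoin //.
exact: kHomExtend_val (kHom1 1 1) rxy1.
Qed.

Lemma root_minCpoly_aut (a z : algC) :
  root (minCpoly a) z -> exists nu : {rmorphism algC -> algC}, nu a = z.
Proof.
(* Realize a |-> z in Qs, the splitting field of minCpoly a, then extend to algC. *)
move=> rz; have [pa [Dpa _] min_pa] := minCpolyP a.
have [r Dr] := closed_field_poly_normal (minCpoly a).
rewrite (monicP (minCpoly_monic a)) scale1r in Dr.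
have [Qs [QsC [s1 Ds1 gen_s1]]] := num_field_exists r.
have /mapP[a' _ Da'] : a \in map QsC s1.
  by rewrite Ds1 -root_prod_XsubC -Dr root_minCpoly.
have /mapP[z' _ Dz'] : z \in map QsC s1 by rewrite Ds1 -root_prod_XsubC -Dr.
have QsC_rat (q : {poly rat}) :
    map_poly QsC (map_poly (in_alg Qs) q) = map_poly ratr q.
  rewrite -map_poly_comp; apply: eq_map_poly => c.
  by rewrite /= rmorphZ_num rmorph1 mulr1.
have split_pa : splittingFieldFor 1 (map_poly (in_alg Qs) pa) fullv.
  exists s1; last by [].
  suff -> : map_poly (in_alg Qs) pa = \prod_(x <- s1) ('X - x%:P) by exact: eqpxx.
  apply: (map_poly_inj QsC); rewrite QsC_rat -Dpa Dr -Ds1 rmorph_prod big_map.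
  by apply: eq_bigr => x _; rewrite /= map_polyXsubC.
have rz' : root (minPoly 1 a') z'.
  have /polyOver1P[m Dm] := minPolyOver 1 a'.
  have : root (map_poly ratr m) a.
    by rewrite -QsC_rat -Dm Da' rmorph_root ?root_minPoly.
  rewrite min_pa => /dvdpP[c Dc].
  by rewrite Dm -(fmorph_root QsC) QsC_rat Dc rmorphM /= rootM -Dpa -Dz' rz orbT.
have [|phi Dphi] := splitting_root_minPoly_rmorph _ split_pa rz'.
  by apply/polyOver1P; exists pa.
have [nu Dnu] := extend_algC_subfield_aut QsC phi.
by exists nu; rewrite Da' -Dnu Dphi.
Qed.

Lemma Aint_prod_roots_minCpoly (a : algC) (r : seq algC) :
  a \in Aint -> minCpoly a = \prod_(z <- r) ('X - z%:P) ->
  \prod_(z <- r) z \is a Num.int.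
Proof.
by move=> /polyOverP/(_ 0%N) + Dr; rewrite Dr coef0_prod_XsubC rpredMsign.
Qed.

Lemma Aint_aut_itv01_eq1 (a : algC) :
    a \in Aint -> a != 0 ->
    (forall nu : {rmorphism algC -> algC}, 0 <= nu a <= 1) ->
  a = 1.
Proof.
move=> Aa nz_a a01.
have [r Dr] := closed_field_poly_normal (minCpoly a).
rewrite (monicP (minCpoly_monic a)) scale1r in Dr.
have r01 z : z \in r -> 0 < z <= 1.
  rewrite -root_prod_XsubC -Dr => /root_minCpoly_aut[nu <-].
  by have /andP[a0 ->] := a01 nu; rewrite andbT lt_def fmorph_eq0 nz_a.
have r0 z : z \in r -> 0 <= z by case/r01/andP=> /ltW.
have r1 z : z \in r -> z <= 1 by case/r01/andP.
have P_gt0 : 0 < \prod_(z <- r) z.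
  by rewrite big_seq prodr_gt0 // => z /r01/andP[].
have P_le1 (s : seq algC) : {subset s <= r} -> \prod_(z <- s) z <= 1.
  by move=> sr; rewrite big_seq prodr_ile1 // => z /sr zr; rewrite r0 ?r1.
have P1 : \prod_(z <- r) z = 1.
  apply/le_anti; rewrite P_le1 //= -(gtr0_norm P_gt0).
  by rewrite norm_intr_ge1 ?(Aint_prod_roots_minCpoly Aa Dr) ?gt_eqF.
have ar : a \in r by rewrite -root_prod_XsubC -Dr root_minCpoly.
apply/le_anti; rewrite (andP (a01 idfun)).2 /=.
rewrite -P1 (big_rem a ar) /= ler_piMr ?r0 ?P_le1 //.
exact: mem_rem.
Qed.

Lemma Aint_aut_ge0_sum_eq1 (I : finType) (a : I -> algC) :
    (forall i, a i \in Aint) ->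
    (forall (nu : {rmorphism algC -> algC}) i, 0 <= nu (a i)) ->
    \sum_i a i = 1 ->
  exists i0, forall i, a i = (i == i0)%:R.
Proof.
move=> Aa a_ge0 sum_a1.
have a01 i : a i = 0 \/ a i = 1.
  have [|nz_ai] := eqVneq (a i) 0; [by left | right].
  apply: Aint_aut_itv01_eq1 => // nu; rewrite a_ge0.
  rewrite -(rmorph1 nu) -sum_a1 rmorph_sum (bigD1 i) //= lerDl.
  exact: sumr_ge0.
have [i0 a_i0] : exists i0, a i0 = 1.
  have [i0 /eqP a_i0|no1] := pickP (fun i => a i == 1); first by exists i0.
  move/eqP: sum_a1; rewrite big1 ?(eq_sym 0) ?oner_eq0 // => i _.
  by case: (a01 i) => // /eqP; rewrite no1.
exists i0 => i; have [-> // | ne_i] := eqVneq i i0.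
move: sum_a1; rewrite (bigD1 i0) //= a_i0 -[RHS]addr0 => /addrI.
by move/psumr_eq0P => -> // j _; rewrite (a_ge0 idfun).
Qed.

Lemma rmorph_factor (A R S : pzRingType) (e : {rmorphism A -> R})
    (h : {rmorphism A -> S}) :
    (forall x, exists a, e a = x) -> (forall a, e a = 0 -> h a = 0) ->
  exists g : {rmorphism R -> S}, forall a, g (e a) = h a.
Proof.
move=> e_surj ker_eh.
have e_surjb x : exists a, e a == x by have [a <-] := e_surj x; exists a.
pose g x := h (xchoose (e_surjb x)).
have gE a : g (e a) = h a.
  have /eqP ec := xchooseP (e_surjb (e a)).
  by apply/eqP; rewrite -subr_eq0 -rmorphB ker_eh // rmorphB ec subrr.
have g_zmod : zmod_morphism g.
  by move=> x y; have [a <-] := e_surj x; have [b <-] := e_surj y;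
    rewrite -rmorphB !gE rmorphB.
have g_monoid : monoid_morphism g.
  split=> [|x y]; first by rewrite -(rmorph1 e) gE rmorph1.
  by have [a <-] := e_surj x; have [b <-] := e_surj y; rewrite -rmorphM !gE rmorphM.
pose gR : {rmorphism R -> S} := HB.pack g
  (GRing.isZmodMorphism.Build _ _ g g_zmod)
  (GRing.isMonoidMorphism.Build _ _ g g_monoid).
by exists gR.
Qed.

Lemma algC_embedding_exists (K : fieldExtType rat) :
  inhabited {rmorphism K -> algC}.
Proof.
have pcharK0 : [pchar K] =i pred0 by move=> p; rewrite pchar_lalg pchar_num.
pose th := separable_generator 1 {:K}.
have gen_th : <<1; th>>%VS = fullv.
  apply/esym/eq_adjoin_separable_generator; last exact: subvf.
  by apply/separableP => y _; apply: pcharf0_separable.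
have /polyOver1P[m Dm] := minPolyOver 1 th.
have sz_m : size (map_poly ratr m : {poly algC}) != 1%N.
  by rewrite size_map_poly -(size_map_poly (in_alg K)) -Dm size_minPoly.
have [w mw0] := closed_rootP _ sz_m.
(* K = Q(th), so evaluation at a complex root w of the minimal polynomial of
   th factors through K. *)
pose evC := horner_morph (fun x : rat => mulrC w (ratr x)).
have [||g _] := @rmorph_factor _ _ _ (horner_alg th) evC; last by constructor.
  move=> x; have /polyOver1P[q Dq] := Fadjoin_polyOver 1 th x.
  by exists q; rewrite -[RHS](@Fadjoin_poly_eq _ _ 1 th x) ?gen_th ?memvf // Dq.
move=> q /eqP q_th0.
have : minPoly 1 th %| map_poly (in_alg K) q.
  by apply: minPoly_dvdp; [apply/polyOver1P; exists q | exact: q_th0].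
rewrite Dm dvdp_map => /dvdpP[c ->].
rewrite rmorphM; apply/eqP; rewrite mulf_eq0 orbC.
by have /eqP -> := rootP mw0.
Qed.

Section RingOfIntegers.

Variable K : fieldExtType rat.
Let intK : {rmorphism int -> K} := intr.

Lemma in_OK_nat (m : nat) : in_OK (m%:R : K).
Proof. exact: (@integral_nat _ _ intK). Qed.

Lemma in_OK_opp (x : K) : in_OK x -> in_OK (- x).
Proof. exact: (@integral_opp _ _ intK). Qed.

Lemma in_OK_add (x y : K) : in_OK x -> in_OK y -> in_OK (x + y).
Proof. exact: (@integral_add _ _ intK). Qed.

Lemma in_OK_mul (x y : K) : in_OK x -> in_OK y -> in_OK (x * y).
Proof. exact: (@integral_mul _ _ intK). Qed.

Lemma in_OK_sum (I : Type) (r : seq I) (P : pred I) (F : I -> K) :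
  (forall i, P i -> in_OK (F i)) -> in_OK (\sum_(i <- r | P i) F i).
Proof.
by move=> OK_F; apply: big_ind => //; [exact: (in_OK_nat 0) | exact: in_OK_add].
Qed.

Lemma in_OK_Aint (g : {rmorphism K -> algC}) (x : K) : in_OK x -> g x \in Aint.
Proof.
case=> p mon_p px0; apply: (@root_monic_Aint (map_poly intr p)).
- have -> : map_poly intr p = map_poly g (map_poly intK p).
    by rewrite -map_poly_comp; apply: eq_map_poly => z /=; rewrite rmorph_int.
  exact: rmorph_root.
- exact: monic_map.
- by apply/polyOverP => i; rewrite coef_map rpred_int.
Qed.

Lemma natr_fieldExt_eq0 (m : nat) : (m%:R == 0 :> K) = (m == 0)%N.
Proof. by rewrite -(rmorph_nat (in_alg K)) fmorph_eq0 pnatr_eq0. Qed.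

End RingOfIntegers.

Section StiefelComplex.

Variables (K : fieldExtType rat) (n : nat).
Implicit Types (v w : 'cV[K]_n) (x y : vertex K n) (M : 'M[K]_n).

Lemma vertex_sval_inj : injective (fun x : vertex K n => sval x).
Proof. by case=> v hv [w hw] /= vw; subst w; rewrite (proof_irrelevance _ hv hw). Qed.

Lemma int_vec_add v w : int_vec v -> int_vec w -> int_vec (v + w).
Proof. by move=> OKv OKw i; rewrite mxE; apply: in_OK_add (OKv i) (OKw i). Qed.

Lemma int_vec_mulmx M v :
  (forall i j, in_OK (M i j)) -> int_vec v -> int_vec (M *m v).
Proof.
by move=> OKM OKv i; rewrite mxE; apply: in_OK_sum => j _; apply: in_OK_mul (OKv j).
Qed.

Lemma qform_mx v : qform v = (v^T *m v) 0 0.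
Proof. by rewrite /qform mxE; apply: eq_bigr => i _; rewrite mxE expr2. Qed.

Lemma Bq_mx v w : Bq v w = (v^T *m w) 0 0 *+ 2.
Proof.
rewrite /Bq /qform !mxE -!sumrB -sumrMnl; apply: eq_bigr => i _.
rewrite !mxE; ring.
Qed.

Lemma BqC v w : Bq v w = Bq w v.
Proof. by rewrite /Bq [w + v]addrC addrAC. Qed.

Lemma BqvN v w : Bq v (- w) = - Bq v w.
Proof. by rewrite !Bq_mx mulmxN mxE mulNrn. Qed.

Lemma Bqvv v : Bq v v = qform v *+ 2.
Proof. by rewrite Bq_mx qform_mx. Qed.

Lemma Bq_scale_delta (s t : K) (i j : 'I_n) :
  Bq (s *: delta_mx i 0) (t *: delta_mx j 0) = (s * t) *+ (i == j) *+ 2.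
Proof.
rewrite Bq_mx -scalemxAr [(s *: _)^T]linearZ /= -scalemxAl.
rewrite trmx_delta mul_delta_mx_cond.
by case: (i == j); rewrite ?mulr0n ?mulr1n !mxE ?mulr0 ?mul0rn // mulr1 mulrC.
Qed.

Lemma Bq_delta (i j : 'I_n) :
  Bq (delta_mx i 0) (delta_mx j 0) = (i == j)%:R *+ 2 :> K.
Proof.
by rewrite -[delta_mx i 0]scale1r -[delta_mx j 0]scale1r Bq_scale_delta mulr1.
Qed.

Lemma is_vertex_opp v : is_vertex v -> is_vertex (- v).
Proof.
case=> OKv qv; split; first by move=> i; rewrite mxE; apply: in_OK_opp (OKv i).
by rewrite -qv /qform; apply: eq_bigr => i _; rewrite mxE sqrrN.
Qed.

Lemma is_vertex_delta (i : 'I_n) : is_vertex (delta_mx i 0 : 'cV[K]_n).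
Proof.
split; first by move=> j; rewrite mxE; apply: in_OK_nat.
by rewrite qform_mx trmx_delta mul_delta_mx mxE.
Qed.

Definition vertex_opp x : vertex K n := exist _ _ (is_vertex_opp (svalP x)).

Definition delta_vertex (i : 'I_n) : vertex K n := exist _ _ (is_vertex_delta i).

Lemma Bq_vertex_self x : Bq (sval x) (sval x) = 2%:R.
Proof. by rewrite Bqvv (proj2 (svalP x)). Qed.

Lemma vertex_opp_neq x : vertex_opp x <> x.
Proof.
move=> /(congr1 (fun y => Bq (sval x) (sval y))) /eqP /=.
by rewrite BqvN Bq_vertex_self eq_sym -addr_eq0 -natrD natr_fieldExt_eq0.
Qed.

Lemma mulmx_vertex_inj (M1 M2 : 'M[K]_n) :
  (forall x, M1 *m sval x = M2 *m sval x) -> M1 = M2.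
Proof.
move=> M12; apply/matrixP => i j.
by have /colP/(_ i) := M12 (delta_vertex j); rewrite /= -!colE !mxE.
Qed.

Lemma is_simplex_pair x y :
  x <> y -> is_simplex [:: x; y] <-> Bq (sval x) (sval y) = 0.
Proof.
move=> ne_xy; split => [simplex_xy | Bxy0 u w].
  by apply: simplex_xy => /=; auto.
move=> /= [<-|[<-|[]]] [<-|[<-|[]]] // ne_uw; try by case: ne_uw.
by rewrite BqC.
Qed.

Lemma simplex_map (f : vertex K n -> vertex K n) :
    injective f ->
    (forall x y, Bq (sval (f x)) (sval (f y)) = Bq (sval x) (sval y)) ->
  forall s, is_simplex s <-> is_simplex (map f s).
Proof.
move=> f_inj f_Bq s; split => [simplex_s | simplex_fs x y sx sy ne_xy].
  move=> _ _ /List.in_map_iff[x [<- sx]] /List.in_map_iff[y [<- sy]] ne_fxy.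
  by rewrite f_Bq; apply: simplex_s => // exy; apply: ne_fxy; rewrite exy.
rewrite -f_Bq; apply: simplex_fs; try exact: List.in_map.
by move/f_inj.
Qed.

Lemma simplicial_aut_Bq_eq0 f : is_simplicial_aut f ->
  forall x y, Bq (sval (f x)) (sval (f y)) = 0 <-> Bq (sval x) (sval y) = 0.
Proof.
case=> /bij_inj f_inj f_simplex x y.
have [<- | ne_xy] := classic (x = y).
  by rewrite !Bq_vertex_self; split => /eqP; rewrite natr_fieldExt_eq0.
have ne_fxy : f x <> f y by move/f_inj.
by rewrite -(is_simplex_pair ne_xy) -(is_simplex_pair ne_fxy) (f_simplex [:: x; y]).
Qed.

Lemma orthogonal_in_On M :
  (forall i j, in_OK (M i j)) -> M^T *m M = 1%:M -> in_On M.
Proof.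
move=> OKM MtM; have [_ unitM] := mulmx1_unit MtM.
have invM : invmx M = M^T by rewrite -[LHS]mul1mx -MtM -mulmxA mulmxV ?mulmx1.
split => // [i j | v _]; first by rewrite invM mxE.
by rewrite !qform_mx trmx_mul -mulmxA (mulmxA M^T) MtM mul1mx.
Qed.

Lemma in_OnV M : in_On M -> in_On (invmx M).
Proof.
case=> OKM unitM OKMi qM; split; rewrite ?unitmx_inv ?invmxK // => v OKv.
by rewrite -(qM _ (int_vec_mulmx OKMi OKv)) mulmxA mulmxV ?mul1mx.
Qed.

Lemma in_On_vertex M v : in_On M -> is_vertex v -> is_vertex (M *m v).
Proof. by case=> OKM _ _ qM [OKv qv]; split; [exact: int_vec_mulmx | rewrite qM]. Qed.

Lemma in_On_Bq M v w :
  in_On M -> int_vec v -> int_vec w -> Bq (M *m v) (M *m w) = Bq v w.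
Proof.
by case=> _ _ _ qM OKv OKw; rewrite /Bq -mulmxDr !qM //; apply: int_vec_add.
Qed.

Definition On_act M (OnM : in_On M) x : vertex K n :=
  exist _ _ (in_On_vertex OnM (svalP x)).

Lemma On_act_simplicial_aut M (OnM : in_On M) : is_simplicial_aut (On_act OnM).
Proof.
have [_ unitM _ _] := OnM.
have actK : cancel (On_act OnM) (On_act (in_OnV OnM)).
  by move=> x; apply: vertex_sval_inj; rewrite /= mulmxA mulVmx ?mul1mx.
have actVK : cancel (On_act (in_OnV OnM)) (On_act OnM).
  by move=> x; apply: vertex_sval_inj; rewrite /= mulmxA mulmxV ?mul1mx.
split; first exact: Bijective actK actVK.
apply: simplex_map; first exact: can_inj actK.
by move=> x y; rewrite /= in_On_Bq //; [case: (svalP x) | case: (svalP y)].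
Qed.

Hypothesis K_real : totally_real K.

Lemma vertex_signed_delta v :
  is_vertex v -> exists (b : bool) (i : 'I_n), v = (-1) ^+ b *: delta_mx i 0.
Proof.
case=> OKv qv1; have [g] := algC_embedding_exists K.
pose a i := g (v i 0) ^+ 2.
have Aint_a i : a i \in Aint by rewrite rpredX ?in_OK_Aint.
have a_ge0 (nu : {rmorphism algC -> algC}) i : 0 <= nu (a i).
  by rewrite rmorphXn -realEsqr (K_real (nu \o g)).
have sum_a : \sum_i a i = 1.
  by rewrite -(rmorph1 g) -qv1 rmorph_sum; apply: eq_bigr => i _; rewrite rmorphXn.
have [i0 gv] := Aint_aut_ge0_sum_eq1 Aint_a a_ge0 sum_a.
have v_delta : v = v i0 0 *: delta_mx i0 0.
  apply/colP => i; rewrite !mxE eqxx andbT.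
  have [-> | ne_i] := eqVneq i i0; first by rewrite mulr1.
  move: (gv i); rewrite /a (negPf ne_i) mulr0 => /eqP.
  by rewrite expf_eq0 fmorph_eq0 => /eqP.
have : v i0 0 ^+ 2 == 1 by rewrite -(fmorph_eq1 g) rmorphXn -/(a i0) gv eqxx.
by rewrite sqrf_eq1 => /orP[] /eqP vi0; [exists false | exists true]; exists i0;
  rewrite v_delta vi0.
Qed.

Lemma vertex_Bq_neq0 x y :
  Bq (sval x) (sval y) != 0 -> exists c : bool, sval y = (-1) ^+ c *: sval x.
Proof.
have [b [i ->]] := vertex_signed_delta (svalP x).
have [c [j ->]] := vertex_signed_delta (svalP y).
rewrite Bq_scale_delta; have [<- _ | ne_ij] := eqVneq i j.
  by exists (b (+) c); rewrite scalerA signr_addb mulrAC -mulrA signrMK.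
by rewrite mulr0n mul0rn eqxx.
Qed.

Lemma simplicial_aut_opp f :
  is_simplicial_aut f -> forall x, f (vertex_opp x) = vertex_opp (f x).
Proof.
move=> f_aut x; have [/bij_inj f_inj _] := f_aut.
have : Bq (sval (f x)) (sval (f (vertex_opp x))) != 0.
  apply/eqP => /(simplicial_aut_Bq_eq0 f_aut) /eqP.
  by rewrite /= BqvN Bq_vertex_self oppr_eq0 natr_fieldExt_eq0.
case/vertex_Bq_neq0 => -[] fNx.
  by apply: vertex_sval_inj; rewrite fNx scaleN1r.
by case: (@vertex_opp_neq x); apply/f_inj/vertex_sval_inj; rewrite fNx scale1r.
Qed.

Lemma simplicial_aut_in_On f : is_simplicial_aut f ->
  exists M, in_On M /\ forall x, sval (f x) = M *m sval x.
Proof.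
move=> f_aut; pose u i := sval (f (delta_vertex i)).
pose M := \matrix_(j, i) u i j 0.
have M_delta i : M *m delta_mx i 0 = u i by apply/colP => j; rewrite -colE !mxE.
have u_orth i j : i != j -> ((u i)^T *m u j) 0 0 = 0.
  move=> ne_ij; have : Bq (u i) (u j) = 0.
    by apply/(simplicial_aut_Bq_eq0 f_aut); rewrite /= Bq_delta (negPf ne_ij) mul0rn.
  rewrite Bq_mx -mulr_natr => /eqP.
  by rewrite mulf_eq0 natr_fieldExt_eq0 orbF => /eqP.
exists M; split=> [|x].
  apply: orthogonal_in_On => [i j|].
    by rewrite mxE; case: (svalP (f (delta_vertex j))).
  apply/matrixP => i j; have -> : (M^T *m M) i j = ((u i)^T *m u j) 0 0.
    by rewrite !mxE; apply: eq_bigr => k _; rewrite !mxE.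
  rewrite [RHS]mxE; have [<-|ne_ij] := eqVneq i j; last exact: u_orth.
  by rewrite -qform_mx; case: (svalP (f (delta_vertex i))).
have [[] [i Dx]] := vertex_signed_delta (svalP x).
  have -> : x = vertex_opp (delta_vertex i).
    by apply: vertex_sval_inj; rewrite Dx scaleN1r.
  by rewrite simplicial_aut_opp //= mulmxN M_delta.
have -> : x = delta_vertex i by apply: vertex_sval_inj; rewrite Dx scale1r.
by rewrite /= M_delta.
Qed.

End StiefelComplex.

Theorem proposition3p13 (K : fieldExtType rat) (n : nat) :
  totally_real K ->
  (* the action map M |-> (v |-> M v) is well defined: O_n(R) -> Aut(X(E^n_R)) *)
  [/\ forall M : 'M[K]_n, in_On M ->
        exists f : vertex K n -> vertex K n,
          (forall v, proj1_sig (f v) = M *m proj1_sig v) /\ is_simplicial_aut f,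
  (* it is injective *)
      forall M1 M2 : 'M[K]_n, in_On M1 -> in_On M2 ->
        (forall v : vertex K n, M1 *m proj1_sig v = M2 *m proj1_sig v) -> M1 = M2
  (* and surjective *)
    & forall f : vertex K n -> vertex K n, is_simplicial_aut f ->
        exists M : 'M[K]_n, in_On M /\
          forall v, proj1_sig (f v) = M *m proj1_sig v].
Proof.
move=> K_real; split.
- by move=> M OnM; exists (On_act OnM); split; last exact: On_act_simplicial_aut.
- by move=> M1 M2 _ _; apply: mulmx_vertex_inj.
- exact: simplicial_aut_in_On.
Qed.
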